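(* Let $G$ be a tournament with matching ordering $v_1,\ldots,v_n$, and let $X=\{1,\ldots,n\}$. Suppose $\sigma\in S_n$ is such that $v_{\sigma(1)},\ldots,v_{\sigma(n)}$ is also a matching ordering of $G$. Then: (a) if $\sigma=\sigma_X$, then $G$ is either transitive or isomorphic to $P_n$, and the ordering $v_1,\ldots,v_n$ is $\pi_2 G$; (b) if $\sigma=\sigma_X^{-1}$, then $G$ is either transitive or isomorphic to $P_n$, and the ordering $v_1,\ldots,v_n$ is $\pi_1 G$; (c) if $n=4$ and $\sigma=\tau_X$, then $G$ is isomorphic to $P_4$, and the ordering $v_1,\ldots,v_4$ is either $\pi_2 G$ or $\pi_2\pi_1 G$.
   Context: A tournament is a finite, non-null, loopless directed graph in which for any two distinct vertices $u,v$ there is exactly one edge with both ends in $\{u,v\}$; write $u\to v$ for the edge from $u$ to $v$. Given an ordering $v_1,\dots,v_n$ of the vertices, a backedge is an edge $v_j\to v_i$ with $j>i$; the ordering is a matching ordering if every vertex is the head or tail of at most one backedge. A tournament is transitive if it has an ordering $u_1,\dots,u_n$ with $u_i\to u_j$ for all $i<j$ (its standard ordering). $P_n$ is the tournament on $u_1,\dots,u_n$ with $u_i\to u_j$ if $j-i\ge2$ and $u_{i+1}\to u_i$ for $1\le i\le n-1$; for $n\ne3$ this defining ordering is unique. For $X=\{b,\dots,a\}$: if $|X|$ is odd, $\sigma_X=(b\ b{+}2\ \cdots\ a{-}2\ a\ a{-}1\ a{-}3\ \cdots\ b{+}1)$; if $|X|$ is even, $\sigma_X=(b\ b{+}2\ \cdots\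 a{-}1\ a\ a{-}2\ \cdots\ b{+}1)$ (identity if $|X|=1$, the transposition $(b\ a)$ if $|X|=2$); if $|X|=4$, $\tau_X=(b\ b{+}2)(b{+}1\ b{+}3)$. For a tournament $G$ on $n$ vertices that is transitive or isomorphic to $P_n$, let $u_1,\dots,u_n$ be its standard ordering (if transitive) or its defining $P_n$ ordering (for $P_3$: some defining ordering); then $\pi_1G$ is the ordering obtained from $u_1,\dots,u_n$ by swapping $u_{2j-1}$ and $u_{2j}$ for every $j$ with $2j\le n$, i.e. $u_2,u_1,u_4,u_3,\dots$; $\pi_2G$ is obtained by swapping $u_{2j}$ and $u_{2j+1}$ for every $j\ge1$ with $2j+1\le n$, i.e. $u_1,u_3,u_2,u_5,u_4,\dots$; and for $G\cong P_4$, $\pi_2\pi_1G$ is the ordering $u_2,u_4,u_1,u_3$. If $n=2$, any ordering counts as $\pi_1G$ and $\pi_2G$. *)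

From mathcomp Require Import all_boot all_fingroup.
Set Implicit Arguments. Unset Strict Implicit. Unset Printing Implicit Defensive.

(* A tournament on the finite vertex type V: adj x y means the edge x -> y. *)
Definition tournament (V : finType) (adj : rel V) : Prop :=
  0 < #|V| /\
  (forall x, ~~ adj x x) /\
  (forall x y, x != y -> adj x y (+) adj y x).

(* An ordering v_1,...,v_n of the vertices is an injection 'I_n -> V
   (together with #|V| = n it is a bijection); position i : 'I_n is the
   paper's index i+1. *)
Definition is_ordering (V : finType) (n : nat) (o : 'I_n -> V) : Prop :=
  #|V| = n /\ injective o.

Definition backedge (V : finType) (adj : rel V) (n : nat) (o : 'I_n -> V)
  (i j : 'I_n) : bool := (i < j) && adj (o j) (o i).

Definition matching_ordering (V : finType) (adj : rel V) (n : nat)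
  (o : 'I_n -> V) : Prop :=
  is_ordering o /\
  forall k : 'I_n,
    #|[set l : 'I_n | backedge adj o k l || backedge adj o l k]| <= 1.

Definition transitive_ordering (V : finType) (adj : rel V) (n : nat)
  (o : 'I_n -> V) : Prop :=
  is_ordering o /\ forall i j : 'I_n, i < j -> adj (o i) (o j).

Definition Pn_ordering (V : finType) (adj : rel V) (n : nat)
  (o : 'I_n -> V) : Prop :=
  is_ordering o /\
  (forall i j : 'I_n, i.+2 <= j -> adj (o i) (o j)) /\
  (forall i j : 'I_n, j = i.+1 :> nat -> adj (o j) (o i)).

(* Permutations on {1,...,n} (1-based, as in the paper), as functions on nat. *)
(* The cyclic permutation (s_0 s_1 ... s_{m-1}) in cycle notation. *)
Definition cycle_fun (s : seq nat) (x : nat) : nat :=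
  if x \in s then nth x (rot 1 s) (index x s) else x.

(* sigma_X for X = {1,...,n}: the cycle (1 3 5 ... [odds up] ... [evens down] ... 4 2) *)
Definition sigmaX_seq (n : nat) : seq nat :=
  [seq k <- iota 1 n | odd k] ++ rev [seq k <- iota 1 n | ~~ odd k].
Definition sigmaX (n : nat) (k : nat) : nat := cycle_fun (sigmaX_seq n) k.

Definition tauX (k : nat) : nat :=
  match k with 1 => 3 | 2 => 4 | 3 => 1 | 4 => 2 | _ => k end.

(* pi_1 / pi_2: the k-th entry (1-based) of pi_1 G (resp. pi_2 G) is
   u_(pi1_idx n k) (resp. u_(pi2_idx n k)), u the standard/defining ordering. *)
Definition pi1_idx (n k : nat) : nat :=
  if odd k then (if k.+1 <= n then k.+1 else k) else k.-1.
Definition pi2_idx (n k : nat) : nat :=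
  if odd k then (if 3 <= k then k.-1 else k) else (if k.+1 <= n then k.+1 else k).
Definition pi21_idx (k : nat) : nat :=
  match k with 1 => 2 | 2 => 4 | 3 => 1 | 4 => 3 | _ => k end.

Definition reindexed (V : finType) (n : nat) (v u : 'I_n -> V)
  (idx : nat -> nat) : Prop :=
  forall i j : 'I_n, j.+1 = idx i.+1 -> v i = u j.

From mathcomp Require Import all_boot all_fingroup.
From mathcomp Require Import zify.

Set Implicit Arguments.
Unset Strict Implicit.
Unset Printing Implicit Defensive.

(* sigma_X = pi_2 pi_1, with pi_1, pi_2 the involutions swapping consecutive
   positions (1 2)(3 4)... resp. (2 3)(4 5)...  So in (a) and (b) there is an
   ordering u of G such that v and v sigma are, in some order, u pi_1 and u pi_2;
   both are matching orderings.  An edge of u going back over distance >= 2 is a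
   backedge of both, while the edge between its left end and the next vertex is a
   backedge of one of them, so such edges do not exist.  Two consecutive edges of
   u pointing in different directions would give their middle vertex two
   backedges in one of the two orderings.  Hence all consecutive edges of u point
   the same way, and u is transitive or a defining ordering of P_n.  Part (c) is a
   check over the 64 tournaments on four vertices. *)

(* 0-based: position k is paired with k.+1 when [odd k = p], so [swap_pairs false n]
   is the paper's pi_1 and [swap_pairs true n] its pi_2; an unpaired position is fixed. *)
Definition swap_pairs (p : bool) (n k : nat) : nat :=
  if (odd k == p) && (k.+1 < n) then k.+1
  else if (odd k != p) && (0 < k) then k.-1 else k.

Ltac swap_pairs_arith := rewrite /swap_pairs; repeat case: ifP; lia.

Lemma swap_pairs_lt p n k : k < n -> swap_pairs p n k < n.
Proof. case: p; swap_pairs_arith. Qed.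

Lemma swap_pairsK p n k : k < n -> swap_pairs p n (swap_pairs p n k) = k.
Proof. case: p; swap_pairs_arith. Qed.

Lemma swap_pairs_far p n a b :
  a.+2 <= b -> b < n -> swap_pairs p n a < swap_pairs p n b.
Proof. case: p; swap_pairs_arith. Qed.

Lemma swap_pairs_succ p n k : k.+1 < n ->
  (swap_pairs p n k < swap_pairs p n k.+1) = (odd k != p) /\
  (swap_pairs p n k.+1 < swap_pairs p n k) = (odd k == p).
Proof. by case: p; split; swap_pairs_arith. Qed.

Lemma pi1_idxE n k : k < n -> pi1_idx n k.+1 = (swap_pairs false n k).+1.
Proof. rewrite /pi1_idx; swap_pairs_arith. Qed.

Lemma pi2_idxE n k : k < n -> pi2_idx n k.+1 = (swap_pairs true n k).+1.
Proof. rewrite /pi2_idx; swap_pairs_arith. Qed.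

Lemma cycle_fun_nth (s : seq nat) i : uniq s -> i < size s ->
  cycle_fun s (nth 0 s i) = nth 0 s (if i.+1 < size s then i.+1 else 0).
Proof.
move=> s_uniq lt_i_s; rewrite /cycle_fun mem_nth // index_uniq //.
rewrite (set_nth_default 0) ?size_rot //.
case: s s_uniq lt_i_s => // x s _ /= lt_i_s.
rewrite rot1_cons nth_rcons ltnS; case: ltnP => // le_s_i.
have -> : i = size s by lia.
by rewrite eqxx.
Qed.

Lemma filter_odd_iota1 n :
  [seq k <- iota 1 n | odd k] = mkseq (fun i => i.*2.+1) (uphalf n).
Proof.
elim: n => // n IHn; rewrite -[n.+1]addn1 iotaD filter_cat IHn /= add1n.
case: ifP => odd_n.
  have -> : uphalf (n + 1) = (uphalf n).+1 by lia.
  by rewrite mkseqS cats1; congr rcons; lia.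
have -> : uphalf (n + 1) = uphalf n by lia.
by rewrite cats0.
Qed.

Lemma filter_even_iota1 n :
  [seq k <- iota 1 n | ~~ odd k] = mkseq (fun i => i.*2.+2) n./2.
Proof.
elim: n => // n IHn; rewrite -[n.+1]addn1 iotaD filter_cat IHn /= add1n.
case: ifP => even_n.
  have -> : (n + 1)./2 = n./2.+1 by lia.
  by rewrite mkseqS cats1; congr rcons; lia.
have -> : (n + 1)./2 = n./2 by lia.
by rewrite cats0.
Qed.

Lemma size_sigmaX_seq n : size (sigmaX_seq n) = n.
Proof.
rewrite /sigmaX_seq filter_odd_iota1 filter_even_iota1.
by rewrite size_cat size_rev !size_mkseq; lia.
Qed.

Lemma sigmaX_seq_uniq n : uniq (sigmaX_seq n).
Proof.
rewrite /sigmaX_seq cat_uniq rev_uniq !filter_uniq ?iota_uniq //= andbT.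
by apply/hasPn => x; rewrite mem_rev !mem_filter => /andP[/negbTE ->].
Qed.

Lemma nth_sigmaX_seq n i : i < n ->
  nth 0 (sigmaX_seq n) i = if i < uphalf n then i.*2.+1 else (n - i).*2.
Proof.
move=> lt_i_n; rewrite /sigmaX_seq filter_odd_iota1 filter_even_iota1.
rewrite nth_cat size_mkseq; case: ifP => [|le_half_i]; first exact: nth_mkseq.
by rewrite nth_rev size_mkseq ?nth_mkseq; lia.
Qed.

Lemma sigmaXE n k : k < n ->
  sigmaX n k.+1 = (swap_pairs true n (swap_pairs false n k)).+1.
Proof.
move=> lt_k_n.
(* the index of k.+1 in sigmaX_seq n *)
pose i := if odd k then n - k.+1./2 else k./2.
have lt_i_n : i < n by rewrite /i; case: ifP; lia.
have <- : nth 0 (sigmaX_seq n) i = k.+1.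
  by rewrite nth_sigmaX_seq // /i; case odd_k: (odd k); case: ifP; lia.
rewrite /sigmaX cycle_fun_nth ?sigmaX_seq_uniq ?size_sigmaX_seq //.
case: ifP => lt_i1_n; rewrite nth_sigmaX_seq; try lia;
  rewrite /i /swap_pairs in lt_i1_n *;
  case odd_k: (odd k) in lt_i1_n *; repeat case: ifP; lia.
Qed.

Lemma tournament_adjC (V : finType) (adj : rel V) (x y : V) :
  tournament adj -> x != y -> adj y x = ~~ adj x y.
Proof. by case=> _ [_ /(_ x y)] xor_xy /xor_xy; case: (adj x y); case: (adj y x). Qed.

(* Reading [r a b] as the edge [U a -> U b]: [U a] and [U b] span a backedge of
   the ordering that puts [U a] at position [al a]. *)
Definition backpair (r : rel nat) (al : nat -> nat) (a b : nat) : bool :=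
  (al a < al b) && r b a || (al b < al a) && r a b.

Definition unique_backpairs (n : nat) (r : rel nat) (al : nat -> nat) : Prop :=
  forall a b c, a < n -> b < n -> c < n ->
    backpair r al a b -> backpair r al a c -> b = c.

Lemma backpairC r al a b : backpair r al a b = backpair r al b a.
Proof. by rewrite /backpair orbC. Qed.

Lemma matching_ordering_partner_uniq (V : finType) (adj : rel V) n (o : 'I_n -> V)
  (k l1 l2 : 'I_n) : matching_ordering adj o ->
  backedge adj o k l1 || backedge adj o l1 k ->
  backedge adj o k l2 || backedge adj o l2 k -> l1 = l2.
Proof.
case=> _ /(_ k) /card_le1_eqP le1 kl1 kl2.
by apply: le1; rewrite inE.
Qed.

Lemma matching_unique_backpairs (V : finType) (adj : rel V) n (o : 'I_n -> V)
  (U : nat -> V) (r : rel nat) (al : nat -> nat) :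
  (forall k, k < n -> al k < n) -> (forall k, k < n -> al (al k) = k) ->
  (forall a b, a < n -> b < n -> adj (U a) (U b) = r a b) ->
  (forall i : 'I_n, o i = U (al i)) ->
  matching_ordering adj o -> unique_backpairs n r al.
Proof.
move=> al_lt alK adjE oE o_match a b c lt_a lt_b lt_c ab ac.
pose pos k (lt_k : k < n) := Ordinal (al_lt k lt_k).
have partner y (lt_y : y < n) : backpair r al a y ->
    backedge adj o (pos a lt_a) (pos y lt_y) || backedge adj o (pos y lt_y) (pos a lt_a).
  by rewrite /backedge !oE /= !alK // !adjE.
move: (matching_ordering_partner_uniq o_match (partner b lt_b ab) (partner c lt_c ac)).
by move=> /(congr1 val) /= /(congr1 al); rewrite !alK.
Qed.

Section OrderingOfFamily.
Variables (V : finType) (adj : rel V) (n : nat) (U : nat -> V).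
Hypotheses (card_V : #|V| = n)
           (U_inj : forall a b, a < n -> b < n -> U a = U b -> a = b).

Lemma is_ordering_of : is_ordering (fun j : 'I_n => U j).
Proof. by split=> // i j /U_inj eqij; apply/val_inj/eqij. Qed.

Lemma transitive_ordering_of :
  (forall a b, a < b -> b < n -> adj (U a) (U b)) ->
  transitive_ordering adj (fun j : 'I_n => U j).
Proof. by move=> fwd; split; [exact: is_ordering_of | move=> i j /fwd; apply]. Qed.

Lemma Pn_ordering_of :
  (forall a b, a.+2 <= b -> b < n -> adj (U a) (U b)) ->
  (forall k, k.+1 < n -> adj (U k.+1) (U k)) ->
  Pn_ordering adj (fun j : 'I_n => U j).
Proof.
move=> far succ; split; first exact: is_ordering_of.
split=> i j; first by move/far; apply.
by move=> /= eq_j; rewrite eq_j; apply: succ; rewrite -eq_j.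
Qed.

End OrderingOfFamily.

Section TwoSwapMatchings.
Variables (n : nat) (r : rel nat).
Hypotheses (r_tour : forall a b, a < n -> b < n -> a != b -> r b a = ~~ r a b)
           (r_unique : forall q, unique_backpairs n r (swap_pairs q n)).

Lemma backpair_swap_succ q k : k.+1 < n ->
  backpair r (swap_pairs q n) k k.+1 = (r k k.+1 == (odd k == q)).
Proof.
move=> lt_k1; rewrite /backpair; have [-> ->] := swap_pairs_succ q lt_k1.
by rewrite r_tour //; try lia; case: (odd k == q); case: (r k k.+1).
Qed.

Lemma backpair_swap_succ_self k : k.+1 < n ->
  backpair r (swap_pairs (odd k == r k k.+1) n) k k.+1.
Proof. by move=> lt_k1; rewrite backpair_swap_succ //; case: (odd k); case: (r _ _). Qed.

Lemma r_far a b : a.+2 <= b -> b < n -> r a b.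
Proof.
move=> le_a2_b lt_b; apply: contraT => not_ab.
have ba : r b a by rewrite r_tour ?not_ab //; lia.
pose q := odd a == r a a.+1.
have far_ab : backpair r (swap_pairs q n) a b by rewrite /backpair swap_pairs_far ?ba.
suff : b = a.+1 by lia.
by apply: r_unique far_ab (backpair_swap_succ_self _); lia.
Qed.

Lemma r_succ_succ k : k.+2 < n -> r k k.+1 = r k.+1 k.+2.
Proof.
move=> lt_k2; apply/eqP; apply: contraT => neq_r.
pose q := odd k == r k k.+1.
have pred_k1 : backpair r (swap_pairs q n) k.+1 k.
  by rewrite backpairC backpair_swap_succ_self //; lia.
have succ_k1 : backpair r (swap_pairs q n) k.+1 k.+2.
  rewrite backpair_swap_succ // /q /=.
  by move: neq_r; case: (odd k); case: (r k k.+1); case: (r k.+1 k.+2).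
suff : k = k.+2 by lia.
by apply: r_unique pred_k1 succ_k1; lia.
Qed.

Lemma r_succ_const k : k.+1 < n -> r k k.+1 = r 0 1.
Proof. by elim: k => // k IHk lt_k2; rewrite -r_succ_succ ?IHk //; lia. Qed.

End TwoSwapMatchings.

Lemma transitive_or_Pn_of_swap_matchings (V : finType) (adj : rel V) n
    (v w : 'I_n -> V) (U : nat -> V) p :
  tournament adj -> matching_ordering adj v -> matching_ordering adj w ->
  (forall i : 'I_n, v i = U (swap_pairs p n i)) ->
  (forall i : 'I_n, w i = U (swap_pairs (~~ p) n i)) ->
  transitive_ordering adj (fun j : 'I_n => U j) \/
  Pn_ordering adj (fun j : 'I_n => U j).
Proof.
move=> adj_tour v_match w_match vE wE.
have card_V : #|V| = n by case: v_match => [[]].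
have U_inj a b : a < n -> b < n -> U a = U b -> a = b.
  move=> lt_a lt_b eqU; pose pos k (lt_k : k < n) := Ordinal (swap_pairs_lt p lt_k).
  have : pos a lt_a = pos b lt_b by apply: v_match.1.2; rewrite !vE /= !swap_pairsK.
  by move/(congr1 (swap_pairs p n \o val)); rewrite /= !swap_pairsK.
pose r a b := adj (U a) (U b).
have r_tour a b : a < n -> b < n -> a != b -> r b a = ~~ r a b.
  by move=> lt_a lt_b neq_ab; apply: tournament_adjC; last by apply: contra neq_ab => /eqP /U_inj ->.
have r_unique q : unique_backpairs n r (swap_pairs q n).
  have [->|->] : q = p \/ q = ~~ p by clear -p q; case: p; case: q; auto.
    by apply: matching_unique_backpairs vE v_match; [exact: swap_pairs_lt | exact: swap_pairsK |].
  by apply: matching_unique_backpairs wE w_match; [exact: swap_pairs_lt | exact: swap_pairsK |].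
have far := r_far r_tour r_unique; have succ := r_succ_const r_tour r_unique.
case: (ltnP 1 n) => [lt_1n | le_n1]; last first.
  by left; apply: transitive_ordering_of => // a b; lia.
case r01 : (r 0 1); [left; apply: transitive_ordering_of | right; apply: Pn_ordering_of] => //.
  move=> a b lt_ab lt_b; case: (ltnP a.+1 b) => [/far | le_b_a1]; first exact.
  have eq_b : b = a.+1 by lia.
  by subst b; move: (succ a lt_b); rewrite r01 /r => ->.
by move=> k lt_k1; rewrite -/(r _ _) r_tour ?succ ?r01 //; lia.
Qed.

Lemma reindexed_swap_matchings (V : finType) (adj : rel V) n (v : 'I_n -> V)
    (sigma : 'S_n) p (idx : nat -> nat) :
  tournament adj -> matching_ordering adj v -> matching_ordering adj (v \o sigma) ->
  (forall i : 'I_n, sigma i = swap_pairs p n (swap_pairs (~~ p) n i) :> nat) ->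
  (forall k, k < n -> idx k.+1 = (swap_pairs p n k).+1) ->
  exists u : 'I_n -> V,
    (transitive_ordering adj u \/ Pn_ordering adj u) /\ reindexed v u idx.
Proof.
move=> adj_tour v_match w_match sigmaE idxE.
have n_gt0 : 0 < n by rewrite -v_match.1.1; exact: adj_tour.1.
pose U k := v (insubd (Ordinal n_gt0) (swap_pairs p n k)).
have vE (i : 'I_n) : v i = U (swap_pairs p n i) by rewrite /U swap_pairsK // valKd.
have wE (i : 'I_n) : (v \o sigma) i = U (swap_pairs (~~ p) n i).
  by rewrite /= vE sigmaE swap_pairsK // swap_pairs_lt.
exists (fun j : 'I_n => U j); split.
  exact: transitive_or_Pn_of_swap_matchings adj_tour v_match w_match vE wE.
by move=> i j; rewrite idxE // vE => -[<-].
Qed.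

Lemma sigmaX_swap_pairs n (sigma : 'S_n) :
  (forall i : 'I_n, (sigma i).+1 = sigmaX n i.+1) ->
  forall i : 'I_n, sigma i = swap_pairs true n (swap_pairs false n i) :> nat.
Proof. by move=> sigmaE i; move: (sigmaE i); rewrite sigmaXE // => -[]. Qed.

Lemma sigmaX_inv_swap_pairs n (sigma : 'S_n) :
  (forall i : 'I_n, ((sigma^-1)%g i).+1 = sigmaX n i.+1) ->
  forall i : 'I_n, sigma i = swap_pairs false n (swap_pairs true n i) :> nat.
Proof.
move=> sigmaE i; move: (sigmaE (sigma i)); rewrite permK sigmaXE // => -[->].
by rewrite !swap_pairsK ?swap_pairs_lt.
Qed.

Definition unique_backpairsb (n : nat) (r : rel nat) (al : nat -> nat) : bool :=
  all (fun a => all (fun b => all (fun c =>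
    backpair r al a b && backpair r al a c ==> (b == c))
  (iota 0 n)) (iota 0 n)) (iota 0 n).

Lemma unique_backpairsT n r al : unique_backpairs n r al -> unique_backpairsb n r al.
Proof.
move=> r_unique; apply/allP => a; rewrite mem_iota => lt_a.
apply/allP => b; rewrite mem_iota => lt_b; apply/allP => c; rewrite mem_iota => lt_c.
by apply/implyP => /andP[ab ac]; rewrite (r_unique a b c) //; lia.
Qed.

Definition Pn_patternb (n : nat) (r : rel nat) (t : nat -> nat) : bool :=
  all (fun a => all (fun b => (a.+2 <= b) ==> r (t a) (t b)) (iota 0 n)) (iota 0 n) &&
  all (fun k => (k.+1 < n) ==> r (t k.+1) (t k)) (iota 0 n).

Definition tournament4 (e01 e02 e03 e12 e13 e23 : bool) : rel nat :=
  let e a b := match a, b with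
    | 0, 1 => e01 | 0, 2 => e02 | 0, 3 => e03
    | 1, 2 => e12 | 1, 3 => e13 | 2, 3 => e23 | _, _ => false end in
  fun a b => if a < b then e a b else if b < a then ~~ e b a else false.

Lemma adj_tournament4 (V : finType) (adj : rel V) (U : nat -> V) :
  tournament adj -> (forall a b, a < 4 -> b < 4 -> U a = U b -> a = b) ->
  forall a b, a < 4 -> b < 4 -> adj (U a) (U b) =
    tournament4 (adj (U 0) (U 1)) (adj (U 0) (U 2)) (adj (U 0) (U 3))
                (adj (U 1) (U 2)) (adj (U 1) (U 3)) (adj (U 2) (U 3)) a b.
Proof.
move=> adj_tour U_inj.
have adj_irr x : adj x x = false by apply/negbTE; exact: adj_tour.2.1.
have adjC a b : a < 4 -> b < 4 -> a != b -> adj (U b) (U a) = ~~ adj (U a) (U b).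
  by move=> lt_a lt_b neq_ab; apply: tournament_adjC; last by apply: contra neq_ab => /eqP /U_inj ->.
case=> [|[|[|[|a]]]] //; case=> [|[|[|[|b]]]] //= _ _; by rewrite ?adj_irr // adjC.
Qed.

Definition tau_pos (k : nat) : nat := (tauX k.+1).-1.

(* If v is pi_2 G (resp. pi_2 pi_1 G) for the defining ordering u of P_4, then
   u_(k+1) = v_(t k + 1) for t = P4_from_pi2 (resp. P4_from_pi21). *)
Definition P4_from_pi2 : nat -> nat := nth 0 [:: 0; 2; 1; 3].
Definition P4_from_pi21 : nat -> nat := nth 0 [:: 2; 0; 3; 1].

Lemma tau_matchings_P4 e01 e02 e03 e12 e13 e23 :
  let r := tournament4 e01 e02 e03 e12 e13 e23 in
  unique_backpairsb 4 r id -> unique_backpairsb 4 r tau_pos ->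
  Pn_patternb 4 r P4_from_pi2 || Pn_patternb 4 r P4_from_pi21.
Proof. by move: e01 e02 e03 e12 e13 e23; do 6!case; vm_compute. Qed.

Lemma Pn_ordering_of_pattern (V : finType) (adj : rel V) n (U : nat -> V)
    (r : rel nat) (t : nat -> nat) :
  #|V| = n -> (forall a b, a < n -> b < n -> U a = U b -> a = b) ->
  (forall a b, a < n -> b < n -> adj (U a) (U b) = r a b) ->
  (forall k, k < n -> t k < n) -> (forall a b, a < n -> b < n -> t a = t b -> a = b) ->
  Pn_patternb n r t -> Pn_ordering adj (fun j : 'I_n => U (t j)).
Proof.
move=> card_V U_inj adjE t_lt t_inj /andP[/allP far /allP succ].
apply: (Pn_ordering_of (U := U \o t)) => // [a b lt_a lt_b /U_inj | a b le_a2_b lt_b | k lt_k1].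
- by move/(_ (t_lt _ lt_a) (t_lt _ lt_b)); exact: t_inj.
- have lt_a : a < n by lia.
  rewrite /= adjE ?t_lt //.
  by move: (far a); rewrite mem_iota => /(_ lt_a)/allP/(_ b); rewrite mem_iota le_a2_b => /(_ lt_b).
- rewrite /= adjE ?t_lt //; try lia.
  by move: (succ k); rewrite mem_iota lt_k1 => /(_ (ltnW lt_k1)).
Qed.

Lemma tau_matchings_reindexed (V : finType) (adj : rel V) (v : 'I_4 -> V) (sigma : 'S_4) :
  tournament adj -> matching_ordering adj v -> matching_ordering adj (v \o sigma) ->
  (forall i : 'I_4, (sigma i).+1 = tauX i.+1) ->
  exists u : 'I_4 -> V,
    Pn_ordering adj u /\ (reindexed v u (pi2_idx 4) \/ reindexed v u pi21_idx).
Proof.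
move=> adj_tour v_match w_match sigmaE.
have card_V : #|V| = 4 by case: v_match => [[]].
pose U a := v (inord a).
have vE (i : 'I_4) : v i = U i by rewrite /U inord_val.
have U_inj a b : a < 4 -> b < 4 -> U a = U b -> a = b.
  by move=> lt_a lt_b /v_match.1.2 /(congr1 val); rewrite /= !inordK.
pose r := tournament4 (adj (U 0) (U 1)) (adj (U 0) (U 2)) (adj (U 0) (U 3))
                      (adj (U 1) (U 2)) (adj (U 1) (U 3)) (adj (U 2) (U 3)).
have adjE := adj_tournament4 adj_tour U_inj.
have tau_lt k : k < 4 -> tau_pos k < 4 by case: k => [|[|[|[|k]]]].
have tauK k : k < 4 -> tau_pos (tau_pos k) = k by case: k => [|[|[|[|k]]]].
have wE (i : 'I_4) : (v \o sigma) i = U (tau_pos i) by rewrite /= vE /tau_pos -sigmaE.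
have unique_v : unique_backpairsb 4 r id.
  by apply/unique_backpairsT/(matching_unique_backpairs _ _ adjE vE v_match).
have unique_w : unique_backpairsb 4 r tau_pos.
  exact/unique_backpairsT/(matching_unique_backpairs tau_lt tauK adjE wE w_match).
case/orP: (tau_matchings_P4 unique_v unique_w) => pattern.
  exists (fun j : 'I_4 => U (P4_from_pi2 j)); split.
    apply: Pn_ordering_of_pattern pattern => //; first by case=> [|[|[|[|k]]]].
    by case=> [|[|[|[|a]]]] [|[|[|[|b]]]].
  by left; case=> [[|[|[|[|i]]]] lt_i] [[|[|[|[|j]]]] lt_j] //= [eq_j]; rewrite vE.
exists (fun j : 'I_4 => U (P4_from_pi21 j)); split.
  apply: Pn_ordering_of_pattern pattern => //; first by case=> [|[|[|[|k]]]].
  by case=> [|[|[|[|a]]]] [|[|[|[|b]]]].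
by right; case=> [[|[|[|[|i]]]] lt_i] [[|[|[|[|j]]]] lt_j] //= [eq_j]; rewrite vE.
Qed.

Theorem proposition5p3 (V : finType) (adj : rel V) (n : nat)
  (v : 'I_n -> V) (sigma : 'S_n) :
  tournament adj ->
  matching_ordering adj v ->
  matching_ordering adj (v \o sigma) ->
  ((forall i : 'I_n, (sigma i).+1 = sigmaX n i.+1) ->
     exists u : 'I_n -> V,
       (transitive_ordering adj u \/ Pn_ordering adj u) /\
       reindexed v u (pi2_idx n)) /\
  ((forall i : 'I_n, ((sigma^-1)%g i).+1 = sigmaX n i.+1) ->
     exists u : 'I_n -> V,
       (transitive_ordering adj u \/ Pn_ordering adj u) /\
       reindexed v u (pi1_idx n)) /\
  (n = 4 -> (forall i : 'I_n, (sigma i).+1 = tauX i.+1) ->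
     exists u : 'I_n -> V,
       Pn_ordering adj u /\
       (reindexed v u (pi2_idx n) \/ reindexed v u pi21_idx)).
Proof.
move=> adj_tour v_match w_match; split; [|split].
- move=> /sigmaX_swap_pairs sigmaE.
  exact: reindexed_swap_matchings adj_tour v_match w_match sigmaE (@pi2_idxE n).
- move=> /sigmaX_inv_swap_pairs sigmaE.
  exact: reindexed_swap_matchings adj_tour v_match w_match sigmaE (@pi1_idxE n).
- by move=> n4; subst n; exact: tau_matchings_reindexed.
Qed.
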